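(* For every bin capacity $S>0$, every finite multiset $D$ of items with sizes in $(0,S]$ and every integer $k\ge1$, $OPT(D_k)\le 2V(D_k)/S+k$.
   Context: $D_k$ is the collection of $k$ copies of each item of $D$, and $V(D_k)$ is the total size of all items in $D_k$ (i.e. $k$ times the total size of $D$). A $k$-times bin packing of $D$ assigns all copies in $D_k$ to bins so that each bin has total size at most $S$ and no bin contains two copies of the same item; $OPT(D_k)$ is the minimum number of bins. *)

From mathcomp Require Import all_boot all_order all_algebra.
Set Implicit Arguments. Unset Strict Implicit. Unset Printing Implicit Defensive.
Import Order.TTheory GRing.Theory Num.Theory.
Local Open Scope ring_scope.

(* A finite multiset D of items is a sequence of item sizes; item i is
   indexed by i : 'I_(size D) and has size D`_i.
   D_k consists of the copies (i, j), i : 'I_(size D), j : 'I_k.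
   A k-times bin packing of D into m bins is an assignment
   f : 'I_(size D) -> 'I_k -> 'I_m  (copy j of item i goes into bin f i j)
   such that every bin has total size at most S and no bin contains two
   copies of the same item (f i is injective for each item i). *)
Definition ktimes_packing (R : numDomainType) (S : R) (D : seq R) (k m : nat)
    (f : 'I_(size D) -> 'I_k -> 'I_m) : Prop :=
  (forall b : 'I_m,
     \sum_(i < size D) \sum_(j < k | f i j == b) D`_i <= S)
  /\ (forall i : 'I_(size D), injective (f i)).

Definition ktimes_packable (R : numDomainType) (S : R) (D : seq R) (k m : nat) : Prop :=
  exists f : 'I_(size D) -> 'I_k -> 'I_m, @ktimes_packing R S D k m f.

Definition Vk (R : numDomainType) (D : seq R) (k : nat) : R :=
  (\sum_(i < size D) D`_i) *+ k.

From mathcomp Require Import all_boot all_order all_algebra.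
From mathcomp Require Import zify lra.
Set Implicit Arguments. Unset Strict Implicit. Unset Printing Implicit Defensive.
Import Order.TTheory GRing.Theory Num.Theory.
Local Open Scope ring_scope.

(* Next Fit packs D into m bins with (m - 1) S <= 2 V(D): when a new bin is
   opened, the item that did not fit and the previous bin together exceed S,
   so consecutive pairs of bins carry more than S.  Using the j-th copy of a
   Next Fit packing for the j-th copies of the items packs D_k into k m bins
   without putting two copies of an item together. *)

Definition bin_packing (R : numDomainType) (S : R) (D : seq R) (m : nat)
    (g : 'I_(size D) -> 'I_m) : Prop :=
  forall b : 'I_m, \sum_(i < size D | g i == b) D`_i <= S.

Section NextFit.

Variables (R : realDomainType) (S : R) (D : seq R).
Hypothesis D_bounded : forall i, 0 <= D`_i <= S.

Definition bin_load (g : nat -> nat) (n b : nat) : R :=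
  \sum_(0 <= i < n | g i == b) D`_i.

Lemma bin_load_ge0 g n b : 0 <= bin_load g n b.
Proof. by apply: sumr_ge0 => i _; case/andP: (D_bounded i). Qed.

Lemma bin_load_unused g n b : (forall i, (i < n)%N -> g i != b) -> bin_load g n b = 0.
Proof.
move=> g_ne; rewrite /bin_load big_nat_cond big_pred0 // => i.
by case: ltnP => //= /g_ne/negbTE.
Qed.

Lemma bin_load_assign g n c b :
  bin_load (fun i => if i == n then c else g i) n.+1 b
  = bin_load g n b + (if c == b then D`_n else 0).
Proof.
rewrite /bin_load !big_mkcond big_nat_recr //= eqxx [in RHS]big_mkcond.
by congr (_ + _); apply: eq_big_nat => i /andP[_ /ltn_eqF->].
Qed.

(* Bins 0..N are in use, N being the open one. *)
Lemma next_fit_prefix n : exists N (g : nat -> nat),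
  [/\ forall i, (i < n)%N -> (g i <= N)%N,
      forall b, bin_load g n b <= S
    & N%:R * S + bin_load g n N <= 2 * \sum_(0 <= i < n) D`_i].
Proof.
elim: n => [|n [N [g [g_le load_le inv]]]].
  exists 0%N, (fun=> 0%N); split=> // [b|]; rewrite /bin_load !big_geq //.
    by have /andP[/le_trans] := D_bounded 0; apply.
  by rewrite mul0r addr0 mulr0.
have /andP[x_ge0 x_le] := D_bounded n.
rewrite big_nat_recr //=.
have [fits|overflows] := lerP (bin_load g n N + D`_n) S.
  exists N, (fun i => if i == n then N else g i); split.
  - by move=> i; rewrite ltnS leq_eqVlt => /orP[/eqP->|/[dup] /ltn_eqF-> /g_le]; rewrite ?eqxx.
  - by move=> b; rewrite bin_load_assign; case: eqP => [<-|_] //; rewrite addr0.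
  - rewrite bin_load_assign eqxx; lra.
have unused : bin_load g n N.+1 = 0.
  by apply: bin_load_unused => i /g_le; rewrite neq_ltn ltnS => ->.
have load_ge0 := bin_load_ge0 g n N.
exists N.+1, (fun i => if i == n then N.+1 else g i); split.
- move=> i; rewrite ltnS leq_eqVlt => /orP[/eqP->|/[dup] /ltn_eqF-> /g_le/leqW //].
  by rewrite eqxx.
- move=> b; rewrite bin_load_assign; case: eqP => [<-|_]; last by rewrite addr0.
  by rewrite unused add0r.
- rewrite bin_load_assign eqxx unused -natr1; lra.
Qed.

Lemma next_fit : exists m (g : 'I_(size D) -> 'I_m),
  bin_packing S g /\ m%:R * S <= 2 * \sum_(i < size D) D`_i + S.
Proof.
have [N [g [g_le load_le inv]]] := next_fit_prefix (size D).
exists N.+1, (fun i : 'I_(size D) => @Ordinal N.+1 (g i) (g_le i (ltn_ord i))); split.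
  by move=> b; apply: le_trans (load_le b); rewrite /bin_load big_mkord.
have := bin_load_ge0 g (size D) N; move: inv; rewrite big_mkord -natr1; lra.
Qed.

End NextFit.

Lemma copy_bin_subproof k N (j : 'I_k) (b : 'I_N) : (j * N + b < k * N)%N.
Proof. by have := ltn_ord j; have := ltn_ord b; nia. Qed.

Definition copy_bin k N (j : 'I_k) (b : 'I_N) : 'I_(k * N) :=
  Ordinal (copy_bin_subproof j b).

Lemma copy_binE k N (j : 'I_k) (b : 'I_N) (c : 'I_(k * N)) :
  (copy_bin j b == c) = (j == c %/ N :> nat)%N && (b == c %% N :> nat)%N.
Proof.
have N_gt0 : (0 < N)%N := leq_ltn_trans (leq0n b) (ltn_ord b).
apply/eqP/andP => [<-|[/eqP j_eq /eqP b_eq]] /=.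
  by rewrite divnMDl // modnMDl divn_small ?modn_small ?addn0.
by apply: val_inj; rewrite /= j_eq b_eq -divn_eq.
Qed.

Lemma copy_bin_injl k N (b : 'I_N) : injective (fun j : 'I_k => copy_bin j b).
Proof.
have N_gt0 : (0 < N)%N := leq_ltn_trans (leq0n b) (ltn_ord b).
move=> j1 j2 /eqP; rewrite copy_binE => /andP[/eqP j1E _]; apply: ord_inj.
by rewrite j1E /= divnMDl // divn_small ?addn0.
Qed.

Lemma ktimes_packing_copy (R : numDomainType) (S : R) (D : seq R) (k N : nat)
    (g : 'I_(size D) -> 'I_N) :
  bin_packing S g -> ktimes_packing S (fun i (j : 'I_k) => copy_bin j (g i)).
Proof.
move=> g_pack; split=> [c|i]; last exact: copy_bin_injl.
have /andP[_ N_gt0] : (0 < k)%N && (0 < N)%N.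
  by rewrite -muln_gt0 (leq_ltn_trans (leq0n c)).
apply: le_trans (g_pack (Ordinal (ltn_pmod c N_gt0))).
rewrite big_mkcond [leRHS]big_mkcond /=; apply: ler_sum => i _.
under eq_bigl do rewrite copy_binE andbC.
rewrite (big_ord1_cond_eq _ (fun=> D`_i) (fun=> g i == c %% N :> nat)%N) ltn_divLR // ltn_ord.
exact: lexx. (* both tests compare [g i] with [c %% N] as naturals *)
Qed.

Theorem lemma10 (R : realFieldType) (S : R) (D : seq R) (k : nat) :
  0 < S ->
  all (fun x => (0 < x) && (x <= S)) D ->
  (1 <= k)%N ->
  exists m : nat, @ktimes_packable R S D k m /\ (m%:R <= 2 * @Vk R D k / S + k%:R).
Proof.
move=> S_gt0 /(all_nthP 0) D_in _.
have D_bounded i : 0 <= D`_i <= S.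
  have [/D_in/andP[/ltW -> ->] //|i_ge] := ltnP i (size D).
  by rewrite nth_default // lexx ltW.
have [m [g [g_pack m_le]]] := next_fit D_bounded.
exists (k * m)%N; split; first by exists (fun i j => copy_bin j (g i)); apply: ktimes_packing_copy.
rewrite -(ler_pM2r S_gt0) mulrDl divfK ?gt_eqF // /Vk natrM -mulr_natr.
have k_ge0 : 0 <= k%:R :> R by [].
nra.
Qed.
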